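(* Let $\mathsf{T}$ be a quantifier-free set theory extending $\mathsf{MLS}$ (its literals include all $\mathsf{MLS}$ literals, in particular membership literals $x\in y$ between set variables). Suppose $\mathsf{T}$ contains a conjunction of literals $\varphi$ with a designated variable $\bar x$ such that, for some integer $k\ge2$: every set assignment satisfying $\varphi$ assigns to $\bar x$ a set of cardinality at most $k$, and some set assignment satisfying $\varphi$ assigns to $\bar x$ a set of cardinality exactly $k$. Then $\mathsf{T}$ is not convex.
   Context: $\mathsf{MLS}$ is the quantifier-free propositional closure of atoms $x=\varnothing$, $x=y$, $x\subseteq y$, $x\in y$, $x=y\setminus z$, $x=y\cup z$, $x=y\cap z$ over set variables, interpreted by set assignments, i.e. maps from finitely many set variables into the von Neumann universe, with the usual meaning of the symbols. A theory of this kind is convex if for every conjunction of its literals $\psi$ and every finite nonempty set $\mathcal{E}$ of equalities between variables, whenever every set assignment satisfying $\psi$ satisfies $\bigvee\mathcal{E}$, there is some $x=y$ in $\mathcal{E}$ satisfied by every set assignment satisfying $\psi$. *)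

From Stdlib Require Import List Arith.
Import ListNotations.

Set Implicit Arguments.

(* A set assignment is modelled as a
   total map from variables into a universe [U] of sets with membership
   [mem]; satisfaction of a literal only depends on the variables occurring
   in it (locality), so this is equivalent to finitely-supported assignments. *)
Definition var := nat.

Inductive mls_atom :=
| AEmpty (x : var)
| AEq (x y : var)
| ASub (x y : var)
| AIn (x y : var)
| ADiff (x y z : var)
| AUnion (x y z : var)
| AInter (x y z : var).

Section Semantics.
Variables (U : Type) (mem : U -> U -> Prop).

Definition mls_atom_sat (s : var -> U) (a : mls_atom) : Prop :=
  match a with
  | AEmpty x => forall w, ~ mem w (s x)
  | AEq x y => s x = s y
  | ASub x y => forall w, mem w (s x) -> mem w (s y)
  | AIn x y => mem (s x) (s y)
  | ADiff x y z => forall w, mem w (s x) <-> (mem w (s y) /\ ~ mem w (s z))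
  | AUnion x y z => forall w, mem w (s x) <-> (mem w (s y) \/ mem w (s z))
  | AInter x y z => forall w, mem w (s x) <-> (mem w (s y) /\ mem w (s z))
  end.

Definition mls_lit := (bool * mls_atom)%type.

Definition mls_lit_sat (s : var -> U) (l : mls_lit) : Prop :=
  if fst l then mls_atom_sat s (snd l) else ~ mls_atom_sat s (snd l).

Record qf_theory := QFTheory {
  tlit : Type;
  tvars : tlit -> list var;
  tsat : (var -> U) -> tlit -> Prop;
  tsat_local : forall s s' l,
      (forall v, In v (tvars l) -> s v = s' v) -> (tsat s l <-> tsat s' l);
  tmls : mls_lit -> tlit;
  tmls_sat : forall s l, tsat s (tmls l) <-> mls_lit_sat s l
}.

Definition sat_conj (T : qf_theory) (s : var -> U) (psi : list (tlit T)) : Prop :=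
  forall l, In l psi -> tsat T s l.

Definition convex (T : qf_theory) : Prop :=
  forall (psi : list (tlit T)) (E : list (var * var)),
    E <> [] ->
    (forall s, sat_conj T s psi -> exists e, In e E /\ s (fst e) = s (snd e)) ->
    exists e, In e E /\ (forall s, sat_conj T s psi -> s (fst e) = s (snd e)).

Definition card_le (a : U) (k : nat) : Prop :=
  exists l : list U, length l <= k /\ forall y, mem y a -> In y l.

Definition card_eq (a : U) (k : nat) : Prop :=
  exists l : list U, length l = k /\ NoDup l /\ forall y, mem y a <-> In y l.

End Semantics.

(* Add fresh variables y_0, ..., y_k to phi together with the literals
   y_i ∈ xbar.  Since xbar has at most k elements in every model, every model
   identifies two of the y_i, so the disjunction of all equalities y_i = y_j
   (i < j) is entailed.  No single one is: starting from a model in which xbar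
   has k >= 2 elements b <> c, send y_j to c and every other y_i to b. *)

From Stdlib Require Import List Arith Lia Classical.
Import ListNotations.

Set Implicit Arguments.
Unset Strict Implicit.

Definition var_pairs (N : var) (n : nat) : list (var * var) :=
  flat_map (fun j => map (fun i => (N + i, N + j)) (seq 0 j)) (seq 0 n).

Lemma In_var_pairs (N : var) (n : nat) (e : var * var) :
  In e (var_pairs N n) <-> exists i j, i < j < n /\ e = (N + i, N + j).
Proof.
  unfold var_pairs; rewrite in_flat_map; split.
  - intros [j [Hj He]]; apply in_map_iff in He as [i [<- Hi]].
    apply in_seq in Hi, Hj; exists i, j; split; [lia | reflexivity].
  - intros [i [j [Hij ->]]]; exists j; split; [apply in_seq; lia |].
    apply in_map_iff; exists i; split; [reflexivity | apply in_seq; lia].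
Qed.

Definition override_from {U : Type} (s : var -> U) (N : var) (g : nat -> U) :
    var -> U :=
  fun v => if v <? N then s v else g (v - N).

Lemma override_from_lt {U : Type} (s : var -> U) N g v :
  v < N -> override_from s N g v = s v.
Proof.
  intros Hv; unfold override_from; apply Nat.ltb_lt in Hv; rewrite Hv; auto.
Qed.

Lemma override_from_add {U : Type} (s : var -> U) N g i :
  override_from s N g (N + i) = g i.
Proof.
  unfold override_from.
  replace (N + i <? N) with false by (symmetry; apply Nat.ltb_ge; lia).
  f_equal; lia.
Qed.

Section NonConvexity.

Variables (U : Type) (mem : U -> U -> Prop).

Lemma card_le_collision (a : U) (k : nat) (f : nat -> U) :
  card_le mem a k -> (forall i, i <= k -> mem (f i) a) ->
  exists i j, i < j <= k /\ f i = f j.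
Proof.
  intros [l [Hlen Hl]] Hf.
  apply NNPP; intro Hinj.
  assert (Hnd : NoDup (map f (seq 0 (S k)))).
  { apply NoDup_map_NoDup_ForallPairs; [| apply seq_NoDup].
    intros i j Hi Hj Heq; apply in_seq in Hi, Hj.
    destruct (lt_eq_lt_dec i j) as [[Hij | Hij] | Hij]; auto;
      exfalso; apply Hinj.
    - exists i, j; split; [lia | exact Heq].
    - exists j, i; split; [lia | symmetry; exact Heq]. }
  assert (Hincl : incl (map f (seq 0 (S k))) l).
  { intros y Hy; apply in_map_iff in Hy as [i [<- Hi]]; apply in_seq in Hi.
    apply Hl, Hf; lia. }
  apply NoDup_incl_length in Hincl; [| exact Hnd].
  rewrite length_map, length_seq in Hincl; lia.
Qed.

Lemma card_eq_two_members (a : U) (k : nat) :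
  2 <= k -> card_eq mem a k -> exists b c, b <> c /\ mem b a /\ mem c a.
Proof.
  intros Hk [[| b [| c l]] [Hlen [Hnd Hl]]]; simpl in Hlen; try lia.
  exists b, c; split; [| split; apply Hl; simpl; auto].
  intros ->; apply NoDup_cons_iff in Hnd as [Hnotin _]; apply Hnotin; left; auto.
Qed.

Variable T : qf_theory mem.

Lemma not_convex_intro (psi : list (tlit T)) (E : list (var * var)) :
  E <> [] ->
  (forall s, sat_conj T s psi -> exists e, In e E /\ s (fst e) = s (snd e)) ->
  (forall e, In e E -> exists s, sat_conj T s psi /\ s (fst e) <> s (snd e)) ->
  ~ convex T.
Proof.
  intros HE Hdisj Hsep Hconv.
  destruct (Hconv psi E HE Hdisj) as [e [He Hall]].
  destruct (Hsep e He) as [s [Hs Hneq]].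
  exact (Hneq (Hall s Hs)).
Qed.

Lemma sat_conj_app (s : var -> U) (psi chi : list (tlit T)) :
  sat_conj T s (psi ++ chi) <-> sat_conj T s psi /\ sat_conj T s chi.
Proof.
  unfold sat_conj; split.
  - intros H; split; intros l Hl; apply H, in_or_app; auto.
  - intros [Hpsi Hchi] l Hl; apply in_app_or in Hl as [Hl | Hl]; auto.
Qed.

Lemma sat_conj_local (s s' : var -> U) (psi : list (tlit T)) :
  (forall l v, In l psi -> In v (tvars T l) -> s v = s' v) ->
  sat_conj T s psi -> sat_conj T s' psi.
Proof.
  intros Hagree Hs l Hl.
  apply (tsat_local T s s' l); [intros v Hv; apply (Hagree l) | apply Hs]; auto.
Qed.

Definition fresh_var (psi : list (tlit T)) (x : var) : var :=
  S (x + list_max (flat_map (tvars T) psi)).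

Lemma tvars_lt_fresh_var (psi : list (tlit T)) (x : var) l v :
  In l psi -> In v (tvars T l) -> v < fresh_var psi x.
Proof.
  intros Hl Hv.
  assert (Hmax : v <= list_max (flat_map (tvars T) psi)).
  { assert (Hall := proj1 (list_max_le (flat_map (tvars T) psi) _) (le_n _)).
    rewrite Forall_forall in Hall; apply Hall, in_flat_map; eauto. }
  unfold fresh_var; lia.
Qed.

Lemma lt_fresh_var (psi : list (tlit T)) (x : var) : x < fresh_var psi x.
Proof. unfold fresh_var; lia. Qed.

Definition mem_lits (N x : var) (n : nat) : list (tlit T) :=
  map (fun i => tmls T (true, AIn (N + i) x)) (seq 0 n).

Lemma sat_mem_lits (s : var -> U) (N x : var) (n : nat) :
  sat_conj T s (mem_lits N x n) <-> forall i, i < n -> mem (s (N + i)) (s x).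
Proof.
  unfold sat_conj, mem_lits; split.
  - intros H i Hi.
    apply (tmls_sat T s (true, AIn (N + i) x)), H, in_map_iff.
    exists i; split; [reflexivity | apply in_seq; lia].
  - intros H l Hl; apply in_map_iff in Hl as [i [<- Hi]]; apply in_seq in Hi.
    apply (tmls_sat T s (true, AIn (N + i) x)), H; lia.
Qed.

Lemma sat_override_fresh (phi : list (tlit T)) (x : var) (s : var -> U)
    (g : nat -> U) (n : nat) :
  sat_conj T s phi -> (forall i, i < n -> mem (g i) (s x)) ->
  sat_conj T (override_from s (fresh_var phi x) g)
    (phi ++ mem_lits (fresh_var phi x) x n).
Proof.
  intros Hs Hg; apply sat_conj_app; split.
  - apply (sat_conj_local (s := s)); [| exact Hs].
    intros l v Hl Hv; symmetry; apply override_from_lt.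
    exact (tvars_lt_fresh_var x Hl Hv).
  - apply sat_mem_lits; intros i Hi.
    rewrite override_from_add, override_from_lt by apply lt_fresh_var.
    auto.
Qed.

End NonConvexity.

Theorem lemma13 (U : Type) (mem : U -> U -> Prop) (T : qf_theory mem)
    (phi : list (tlit T)) (xbar : var) (k : nat) :
  2 <= k ->
  (forall s, sat_conj T s phi -> card_le mem (s xbar) k) ->
  (exists s, sat_conj T s phi /\ card_eq mem (s xbar) k) ->
  ~ convex T.
Proof.
  intros Hk Hle [s0 [Hs0 Hcard]].
  set (N := fresh_var phi xbar).
  apply not_convex_intro with (psi := phi ++ mem_lits T N xbar (S k))
    (E := var_pairs N (S k)).
  - intros Hnil.
    assert (H01 : In (N + 0, N + 1) (var_pairs N (S k)))
      by (apply In_var_pairs; exists 0, 1; split; [lia | reflexivity]).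
    rewrite Hnil in H01; contradiction.
  - intros s Hs; apply sat_conj_app in Hs as [Hphi Hys].
    rewrite sat_mem_lits in Hys.
    destruct (card_le_collision (f := fun i => s (N + i)) (Hle s Hphi))
      as [i [j [Hij Heq]]]; [intros i Hi; apply Hys; lia |].
    exists (N + i, N + j); split; [| exact Heq].
    apply In_var_pairs; exists i, j; split; [lia | reflexivity].
  - intros e He; apply In_var_pairs in He as [i [j [Hij ->]]].
    destruct (card_eq_two_members Hk Hcard) as [b [c [Hbc [Hb Hc]]]].
    exists (override_from s0 N (fun m => if m =? j then c else b)); split.
    + apply sat_override_fresh; [exact Hs0 |].
      intros m _; destruct (m =? j); assumption.
    + cbn [fst snd]; rewrite !override_from_add, Nat.eqb_refl.
      replace (i =? j) with false by (symmetry; apply Nat.eqb_neq; lia).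
      exact Hbc.
Qed.
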